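(* Let $d\ge 3$ be odd. The group $G_d$ is not just infinite, i.e., it is infinite and has a nontrivial normal subgroup of infinite index.
   Context: Let $d\ge 3$, $X=\{1,\dots,d\}$, $T$ the $d$-regular rooted tree with vertex set $X^*$. $\mathrm{Aut}(T)$ is the group of root-preserving automorphisms with product left-to-right: $(gh)(u)=h(g(u))$. Sections $g|_u$ are defined by $g(uv)=g(u)\,g|_u(v)$; we write $g=(g|_1,\dots,g|_d)\lambda_g$ with $\lambda_g\in S_d$ the action on the first level; $e$ is the identity; $\overline{j}\in\{1,\dots,d\}$ denotes $j$ mod $d$. $G_d=\langle a_1,\dots,a_d\rangle\le\mathrm{Aut}(T)$ where $a_i$ acts on the first level as $(i\ \overline{i+1})$, with $a_i|_i=a_i$, $a_i|_{\overline{i+1}}=a_{\overline{i+1}}$, and $a_i|_x=e$ otherwise. A group is just infinite if it is infinite and every nontrivial normal subgroup has finite index. *)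

From mathcomp Require Import all_boot.
Set Implicit Arguments.
Unset Strict Implicit.
Unset Printing Implicit Defensive.

(* Letters X = {1,...,d} are encoded as 'I_d = {0,...,d-1} (letter k+1 <-> k).
   Vertices of the d-regular rooted tree T are words  seq 'I_d.
   The cyclic successor j |-> j+1 mod d is  ordS j. *)

Definition tfun (d : nat) := seq 'I_d -> seq 'I_d.

(* Product is left-to-right: (g h)(u) = h (g u). *)
Definition tmul (d : nat) (g h : tfun d) : tfun d := fun u => h (g u).
Definition tid (d : nat) : tfun d := fun u => u.

Fixpoint gen_a (d : nat) (i : 'I_d) (w : seq 'I_d) {struct w} : seq 'I_d :=
  match w with
  | [::] => [::]
  | x :: v =>
      if x == i then ordS i :: gen_a i v
      else if x == ordS i then i :: gen_a (ordS i) v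
      else x :: v
  end.

(* G_d = < a_1, ..., a_d >: closure of the identity under right multiplication
   by generators and by their inverses (g = f a_i^{-1}  iff  g a_i = f). *)
Inductive in_Gd (d : nat) : tfun d -> Prop :=
| Gd_id : in_Gd (@tid d)
| Gd_mul (f : tfun d) (i : 'I_d) : in_Gd f -> in_Gd (tmul f (gen_a i))
| Gd_div (f g : tfun d) (i : 'I_d) : in_Gd f -> tmul g (gen_a i) = f -> in_Gd g.

Definition infinite_set (d : nat) (G : tfun d -> Prop) : Prop :=
  ~ exists gs : seq (tfun d),
      forall g, G g -> exists2 k, k < size gs & g = nth (@tid d) gs k.

(* N is a subgroup of G (the inverse m of n is characterized by n m = 1,
   all maps involved being bijections of the tree). *)
Definition subgroup (d : nat) (G N : tfun d -> Prop) : Prop :=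
  [/\ forall n, N n -> G n,
      N (@tid d),
      forall n m, N n -> N m -> N (tmul n m)
    & forall n m, N n -> G m -> tmul n m = @tid d -> N m].

(* N is normal in G: g^{-1} n g lies in N for every g in G, n in N. *)
Definition normal_subgroup (d : nat) (G N : tfun d -> Prop) : Prop :=
  subgroup G N /\
  forall g n, G g -> N n -> exists2 m, N m & tmul g m = tmul n g.

Definition finite_index (d : nat) (G N : tfun d -> Prop) : Prop :=
  exists hs : seq (tfun d),
    (forall k, k < size hs -> G (nth (@tid d) hs k)) /\
    forall g, G g -> exists2 k, k < size hs &
       exists2 n, N n & g = tmul n (nth (@tid d) hs k).

(* The exponent sum of a word in the letters a_i^(+-1) depends only on the
   element of G_d it represents, so it is a homomorphism G_d -> Z.  Its kernel
   is normal of infinite index (the powers of a_1 lie in distinct cosets) and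
   contains the nontrivial commutator [a_1, a_2].

   Well-definedness amounts to: a relator w has exponent sum 0.  The section
   words of w at the d first-level vertices are relators again, none is longer
   than w, and their exponent sums add up to twice that of w, since each letter
   of w contributes one letter of the same sign to exactly two sections.  Take
   a shortest relator w with nonzero exponent sum.  If only one section is as
   long as w with nonzero exponent sum, its exponent sum is twice that of w.
   If two sections at x <> y are that long, every letter of w must move both x
   and y, which for d >= 3 forces all letters to be a_i^(+-1) for a single i;
   then w starts with a_i a_i or a_i^-1 a_i^-1 (by minimality), and one more
   round of sections yields a word of the same length with doubled exponent
   sum.  Iterating, the exponent sum outgrows the length: contradiction. *)
From mathcomp Require Import all_boot all_algebra zify.
From Stdlib Require Import FunctionalExtensionality Classical.

Set Implicit Arguments.
Unset Strict Implicit.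
Unset Printing Implicit Defensive.

Import GRing.Theory.

Lemma iter_ordS_val d (i : 'I_d) k : iter k (@ordS d) i = (i + k) %% d :> nat.
Proof.
elim: k => [|k IH] /=; first by rewrite addn0 modn_small.
by rewrite IH -addn1 modnDml addn1 addnS.
Qed.

Lemma iter_ordS_neq d (i : 'I_d) k : 0 < k < d -> iter k (@ordS d) i != i.
Proof.
case/andP=> k_gt0 k_ltd; apply/eqP => /(congr1 (@nat_of_ord d)) /eqP.
rewrite iter_ordS_val -{2}(modn_small (ltn_ord i)) -{2}(addn0 i) eqn_modDl.
by rewrite mod0n modn_small // => /eqP k0; rewrite k0 in k_gt0.
Qed.

Lemma ordS_neq d (i : 'I_d) : 1 < d -> ordS i != i.
Proof. by move=> d_gt1; apply: (@iter_ordS_neq d i 1). Qed.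

Lemma ordSS_neq d (i : 'I_d) : 2 < d -> ordS (ordS i) != i.
Proof. by move=> d_gt2; apply: (@iter_ordS_neq d i 2); rewrite d_gt2. Qed.

Section Words.

Variable d : nat.

Fixpoint gen_ainv (i : 'I_d) (w : seq 'I_d) {struct w} : seq 'I_d :=
  match w with
  | [::] => [::]
  | x :: v =>
      if x == ordS i then i :: gen_ainv i v
      else if x == i then ordS i :: gen_ainv (ordS i) v
      else x :: v
  end.

(* The letter (i, true) stands for a_i and (i, false) for a_i^-1. *)
Definition letter := ('I_d * bool)%type.

Definition lgen (l : letter) : tfun d := if l.2 then gen_a l.1 else gen_ainv l.1.

Fixpoint weval (w : seq letter) : tfun d :=
  fun u => if w is l :: w' then weval w' (lgen l u) else u.

Lemma weval_cat w1 w2 u : weval (w1 ++ w2) u = weval w2 (weval w1 u).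
Proof. by elim: w1 u => //= l w IH u. Qed.

(* The image of the first letter x and the section at x of a single letter. *)
Definition lrec (l : letter) (x : 'I_d) : 'I_d * seq letter :=
  let: (i, b) := l in
  if x == (if b then i else ordS i) then (if b then ordS i else i, [:: (i, b)])
  else if x == (if b then ordS i else i) then
    (if b then i else ordS i, [:: (ordS i, b)])
  else (x, [::]).

Fixpoint wperm (w : seq letter) (x : 'I_d) : 'I_d :=
  if w is l :: w' then wperm w' (lrec l x).1 else x.

Fixpoint wsec (w : seq letter) (x : 'I_d) : seq letter :=
  if w is l :: w' then (lrec l x).2 ++ wsec w' (lrec l x).1 else [::].

Lemma wsec_cons l w x : wsec (l :: w) x = (lrec l x).2 ++ wsec w (lrec l x).1.
Proof. by []. Qed.

Lemma lgen_cons l x v : lgen l (x :: v) = (lrec l x).1 :: weval (lrec l x).2 v.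
Proof. by case: l => i [] /=; rewrite /lgen /=; do 2?case: ifP. Qed.

Lemma weval_cons w x v : weval w (x :: v) = wperm w x :: weval (wsec w x) v.
Proof. by elim: w x v => //= l w IH x v; rewrite lgen_cons IH weval_cat. Qed.

Definition nsign (b : bool) (w : seq letter) := count (fun l : letter => l.2 == b) w.

Definition exp_sum (w : seq letter) : int := ((nsign true w)%:Z - (nsign false w)%:Z)%R.

Lemma size_nsign w : size w = nsign true w + nsign false w.
Proof. by elim: w => //= -[i []] w ->; rewrite /nsign /=; lia. Qed.

Lemma nsign_cat b w1 w2 : nsign b (w1 ++ w2) = nsign b w1 + nsign b w2.
Proof. exact: count_cat. Qed.

Lemma exp_sum_cat w1 w2 : exp_sum (w1 ++ w2) = (exp_sum w1 + exp_sum w2)%R.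
Proof. by rewrite /exp_sum !nsign_cat; lia. Qed.

Lemma abs_exp_sum_le w : (`|exp_sum w| <= size w)%R.
Proof. by rewrite size_nsign /exp_sum; lia. Qed.

Lemma size_lrec l x : size (lrec l x).2 = (x == l.1) || (x == ordS l.1).
Proof.
by case: l => i [] /=; case: (x =P i) => [->|] /=; case: (x =P ordS i) => //=; case: ifP.
Qed.

Lemma nsign_lrec b l x : nsign b (lrec l x).2 = (l.2 == b) * size (lrec l x).2.
Proof. by case: l => i [] /=; do 2?case: ifP => _; rewrite /nsign /= ?addn0 ?muln1 ?muln0. Qed.

Lemma size_lrec_le l x : size (lrec l x).2 <= 1.
Proof. by rewrite size_lrec; case: (_ || _). Qed.

Lemma lrec_full l x : size (lrec l x).2 = 1 -> (x == l.1) || (x == ordS l.1).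
Proof. by rewrite size_lrec; case: (_ || _). Qed.

Lemma size_wsec_le w x : size (wsec w x) <= size w.
Proof.
elim: w x => //= l w IH x; rewrite size_cat.
by have := IH (lrec l x).1; have := size_lrec_le l x; lia.
Qed.

Lemma nsign_wsec_le b w x : nsign b (wsec w x) <= nsign b w.
Proof.
elim: w x => //= l w IH x; rewrite nsign_cat nsign_lrec.
by have := IH (lrec l x).1; have := size_lrec_le l x; rewrite /nsign /=; nia.
Qed.

Lemma full_wsec_cons l w x : size (wsec (l :: w) x) = size (l :: w) ->
  size (lrec l x).2 = 1 /\ size (wsec w (lrec l x).1) = size w.
Proof.
rewrite /= size_cat.
by have := size_lrec_le l x; have := size_wsec_le w (lrec l x).1; lia.
Qed.

Lemma full_wsec_exp_sum w x : size (wsec w x) = size w -> exp_sum (wsec w x) = exp_sum w.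
Proof.
rewrite !size_nsign /exp_sum => full.
by have := nsign_wsec_le true w x; have := nsign_wsec_le false w x; lia.
Qed.

Definition relator (w : seq letter) := forall u, weval w u = u.

Lemma relator_wsec w x : relator w -> relator (wsec w x).
Proof. by move=> Rw v; have := Rw (x :: v); rewrite weval_cons => -[]. Qed.

Definition winv (w : seq letter) : seq letter := rev (map (fun l => (l.1, ~~ l.2)) w).

Lemma nsign_winv b w : nsign b (winv w) = nsign (~~ b) w.
Proof.
rewrite /nsign /winv count_rev count_map.
by apply: eq_count => -[i c] /=; case: b; case: c.
Qed.

Lemma exp_sum_winv w : exp_sum (winv w) = (- exp_sum w)%R.
Proof. by rewrite /exp_sum !nsign_winv /=; lia. Qed.

Section Nondegenerate.

Hypothesis d_gt1 : 1 < d.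

Lemma gen_ainvK (i : 'I_d) : cancel (gen_a i) (gen_ainv i).
Proof.
move=> w; elim: w i => //= x v IH i.
case: (x =P i) => [->|x_neq_i]; first by rewrite /= eqxx IH.
case: (x =P ordS i) => [->|x_neq_Si] /=.
  by rewrite eq_sym (negbTE (ordS_neq i d_gt1)) eqxx IH.
by rewrite (introF eqP x_neq_Si) (introF eqP x_neq_i).
Qed.

Lemma gen_aK (i : 'I_d) : cancel (gen_ainv i) (gen_a i).
Proof.
move=> w; elim: w i => //= x v IH i.
case: (x =P ordS i) => [->|x_neq_Si]; first by rewrite /= eqxx IH.
case: (x =P i) => [->|x_neq_i] /=.
  by rewrite (negbTE (ordS_neq i d_gt1)) eqxx IH.
by rewrite (introF eqP x_neq_Si) (introF eqP x_neq_i).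
Qed.

Lemma weval_winv_r w u : weval (w ++ winv w) u = u.
Proof.
elim: w u => //= l w IH u.
rewrite /winv /= rev_cons -cats1 -/(winv w) catA weval_cat IH /=.
by case: l => i [] /=; rewrite /lgen /= ?gen_ainvK ?gen_aK.
Qed.

Lemma lrecK l : involutive (fun x => (lrec l x).1).
Proof.
move/eqP: (ordS_neq l.1 d_gt1) => S_neq.
by case: l S_neq => i [] /= S_neq x; case: (x =P i) => [?|x_i];
  case: (x =P ordS i) => [?|x_Si]; subst => //=; repeat (case: eqP => //= ?); congruence.
Qed.

Lemma sum_size_lrec l : \sum_(x < d) size (lrec l x).2 = 2.
Proof.
have Si_neq : l.1 != ordS l.1 by rewrite eq_sym ordS_neq.
rewrite (eq_bigr _ (fun x _ => size_lrec l x)) (bigD1 l.1) //= eqxx.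
rewrite (bigD1 (ordS l.1)) /=; last by rewrite eq_sym.
rewrite eqxx orbT big1 // => x /andP [x_neq_Si x_neq_i].
by rewrite (negbTE x_neq_Si) (negbTE x_neq_i).
Qed.

(* Each letter of w occurs, with its sign, in exactly two sections of w. *)
Lemma sum_nsign_wsec b w : \sum_(x < d) nsign b (wsec w x) = 2 * nsign b w.
Proof.
elim: w => [|l w IH] /=; first by rewrite big1.
under eq_bigr do rewrite nsign_cat nsign_lrec.
rewrite big_split /= -big_distrr /= sum_size_lrec.
have -> : \sum_(x < d) nsign b (wsec w (lrec l x).1) = \sum_(x < d) nsign b (wsec w x).
  by rewrite [RHS](reindex_inj (can_inj (lrecK l))).
rewrite IH.
by rewrite /nsign /=; lia.
Qed.

Lemma sum_exp_sum_wsec w : (\sum_(x < d) exp_sum (wsec w x) = 2 * exp_sum w)%R.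
Proof.
rewrite /exp_sum sumrB -!(big_morph Posz PoszD erefl) !sum_nsign_wsec.
by rewrite mulrBr !PoszM.
Qed.

Lemma lrec_index l : (lrec l l.1).1 = ordS l.1.
Proof.
by have := ordS_neq l.1 d_gt1; case: l => i [] /=; rewrite ?eqxx // eq_sym => /negbTE ->.
Qed.

Lemma relator_single l : ~ relator [:: l].
Proof.
move=> /(_ [:: l.1]) /=; rewrite lgen_cons lrec_index => -[] /eqP.
by rewrite (negbTE (ordS_neq l.1 d_gt1)).
Qed.

Lemma relator_cancel i b w : relator [:: (i, b), (i, ~~ b) & w] -> relator w.
Proof.
by move=> Rw u; have := Rw u; case: b {Rw} => /=; rewrite /lgen /= ?gen_ainvK ?gen_aK.
Qed.

Lemma lrec_twice i b x : size (lrec (i, b) x).2 = 1 -> exists j1 j2, j1 != j2 /\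
  (lrec (i, b) x).2 ++ (lrec (i, b) (lrec (i, b) x).1).2 = [:: (j1, b); (j2, b)].
Proof.
have S_neq := ordS_neq i d_gt1; have Si_neq : i != ordS i by rewrite eq_sym.
move/lrec_full => /orP [] /eqP -> /=; case: b;
  rewrite ?eqxx ?(negbTE S_neq) ?(negbTE Si_neq) /= ?eqxx ?(negbTE S_neq) ?(negbTE Si_neq);
  by [exists i, (ordS i) | exists (ordS i), i].
Qed.

Lemma in_GdP g : in_Gd g <-> exists w, weval w = g.
Proof.
split.
  elim=> [|f i _ [w <-]|f g' i _ [w ew] e]; first by exists [::].
    by exists (rcons w (i, true)); apply: functional_extensionality => u;
      rewrite -cats1 weval_cat.
  exists (rcons w (i, false)); apply: functional_extensionality => u.
  by rewrite -cats1 weval_cat ew -e /= /lgen /= /tmul gen_ainvK.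
case=> w <-; elim/last_ind: w => [|w [i b] IH]; first exact: Gd_id.
have -> : weval (rcons w (i, b)) = tmul (weval w) (lgen (i, b)).
  by apply: functional_extensionality => u; rewrite -cats1 weval_cat.
case: b => /=; first exact: Gd_mul.
apply: (Gd_div (f := weval w) (i := i)) => //.
by apply: functional_extensionality => u; rewrite /tmul /lgen /= gen_aK.
Qed.

End Nondegenerate.

Section ExponentSum.

Hypothesis d_gt2 : 2 < d.

Let d_gt1 : 1 < d. Proof. exact: ltnW. Qed.

Definition swaps (x y i : 'I_d) :=
  ((x == i) && (y == ordS i)) || ((y == i) && (x == ordS i)).

Lemma swaps_sym x y i : swaps x y i = swaps y x i.
Proof. by rewrite /swaps orbC. Qed.

Lemma swaps_uniq x y i j : swaps x y i -> swaps x y j -> i = j.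
Proof.
move/eqP: (ordSS_neq i d_gt2) => SSi.
by case/orP=> /andP [/eqP -> /eqP ->]; case/orP=> /andP [/eqP ? /eqP ?]; congruence.
Qed.

Lemma lrec_swaps l x y : swaps x y l.1 -> (lrec l x).1 = y.
Proof.
have S_neq := ordS_neq l.1 d_gt1.
case: l S_neq => i [] /= S_neq /orP [] /andP [/eqP -> /eqP ->] /=;
  by rewrite ?eqxx ?(negbTE S_neq) // eq_sym (negbTE S_neq).
Qed.

Lemma lrec_full_swaps l x y : x != y ->
  size (lrec l x).2 = 1 -> size (lrec l y).2 = 1 -> swaps x y l.1.
Proof.
move=> + /lrec_full hx /lrec_full hy; rewrite /swaps.
by case/orP: hx hy => /eqP -> /orP [] /eqP ->; rewrite ?eqxx ?orbT.
Qed.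

Lemma full_wsec_swaps w x y : x != y ->
  size (wsec w x) = size w -> size (wsec w y) = size w ->
  {in w, forall l, swaps x y l.1}.
Proof.
elim: w x y => // l w IH x y x_neq_y /full_wsec_cons [lx wx] /full_wsec_cons [ly wy].
have xy_l : swaps x y l.1 by apply: lrec_full_swaps.
have yx_l : swaps y x l.1 by rewrite swaps_sym.
rewrite (lrec_swaps xy_l) in wx; rewrite (lrec_swaps yx_l) in wy.
move=> l'; rewrite inE => /predU1P [-> //|l'_w].
by rewrite swaps_sym; apply: IH l'_w; rewrite // eq_sym.
Qed.

Section MinimalCounterexample.

Variable n : nat.

Hypothesis balanced_below : forall w, size w < n -> relator w -> exp_sum w = 0.

Definition bad w := [/\ size w = n, relator w & exp_sum w != 0].

Lemma bad_wsec w x : bad w -> exp_sum (wsec w x) != 0 -> bad (wsec w x).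
Proof.
case=> size_w Rw _ nz; split => //; last exact: relator_wsec.
have := size_wsec_le w x; rewrite size_w leq_eqVlt => /predU1P [//|lt_n].
by move: nz; rewrite (balanced_below lt_n) ?eqxx //; apply: relator_wsec.
Qed.

Lemma bad_wsec_split w : bad w -> exists x, bad (wsec w x) /\
  (exp_sum (wsec w x) = (2 * exp_sum w)%R \/ {in w &, forall l l', l.1 = l'.1}).
Proof.
move=> bad_w; have [size_w _ nz_w] := bad_w.
have [x nz_x | all0] := pickP (fun x => exp_sum (wsec w x) != 0); last first.
  have : (2 * exp_sum w = 0)%R.
    by rewrite -sum_exp_sum_wsec //; apply: big1 => x _; apply/eqP/negbFE/all0.
  by move: nz_w; lia.
have bad_x := bad_wsec bad_w nz_x; exists x; split => //.
have [y /andP [x_neq_y nz_y] | only_x] :=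
  pickP (fun y => (x != y) && (exp_sum (wsec w y) != 0)).
  have full z : bad (wsec w z) -> size (wsec w z) = size w by case=> ->.
  have := full_wsec_swaps x_neq_y (full _ bad_x) (full _ (bad_wsec bad_w nz_y)).
  by move=> swaps_w; right=> l l' /swaps_w + /swaps_w; apply: swaps_uniq.
left; rewrite -sum_exp_sum_wsec // (bigD1 x) //= big1 ?addr0 // => y y_neq_x.
by apply/eqP/negbFE; have := only_x y; rewrite eq_sym y_neq_x.
Qed.

Lemma bad_double w : bad w -> exists2 w', bad w' & exp_sum w' = (2 * exp_sum w)%R.
Proof.
move=> bad_w; have [x [bad_x [double | same_index]]] := bad_wsec_split bad_w.
  by exists (wsec w x).
have [size_w Rw nz_w] := bad_w.
have full_x : size (wsec w x) = size w by case: bad_x => ->.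
case: w bad_w size_w Rw nz_w same_index full_x bad_x => [|l1 [|l2 w]] bad_w size_w Rw nz_w.
- by rewrite /exp_sum /nsign /= in nz_w.
- by have := relator_single d_gt1 Rw.
move=> same_index full_x bad_x.
have e12 : l1.1 = l2.1 by apply: same_index; rewrite !inE eqxx ?orbT.
case: l1 l2 e12 size_w Rw nz_w full_x bad_x {bad_w same_index} => i b [i2 b2] e12.
have <- : i = i2 := e12; clear e12.
have [-> size_w Rw | b2_neq] := eqVneq b2 (~~ b).
  have lt_n : size w < n by rewrite -size_w /=.
  rewrite -[_ :: _ :: w]/([:: (i, b); (i, ~~ b)] ++ w) exp_sum_cat.
  rewrite (balanced_below lt_n (relator_cancel d_gt1 Rw)).
  by rewrite /exp_sum /nsign /=; case: b {Rw size_w}.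
have -> : b2 = b by move: b2_neq; case: b; case: b2.
move=> _ _ _ full_x bad_x.
have [/lrec_twice [//|j1 [j2 [j12 sec2]]] _] := full_wsec_cons full_x.
have [x2 [bad_x2 [double | same_index]]] := bad_wsec_split bad_x.
  by exists (wsec (wsec [:: (i, b), (i, b) & w] x) x2); rewrite // double full_wsec_exp_sum.
rewrite !wsec_cons catA sec2 in same_index; case/negP: j12; apply/eqP.
by apply: (same_index (j1, b) (j2, b)); rewrite ?mem_head // inE mem_head orbT.
Qed.

Lemma bad_exp_sum_unbounded w : bad w ->
  forall k : nat, exists2 w', bad w' & (k%:Z <= `|exp_sum w'|)%R.
Proof.
move=> bad_w; elim=> [|k [w' bad_w' le_k]]; first by exists w => //; lia.
have [w'' bad_w'' double] := bad_double bad_w'; exists w'' => //.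
by have [_ _ nz] := bad_w'; rewrite double; move: nz le_k; lia.
Qed.

Lemma not_bad w : ~ bad w.
Proof.
move=> /bad_exp_sum_unbounded /(_ n.+1) [w' [size_w' _ _]].
by have := abs_exp_sum_le w'; rewrite size_w'; lia.
Qed.

End MinimalCounterexample.

Lemma relator_exp_sum w : relator w -> exp_sum w = 0.
Proof.
have [n lt_w] := ubnP (size w); elim: n w lt_w => // n IH w lt_w Rw.
apply/eqP/negPn/negP => nz; apply: (@not_bad (size w) _ w); last by split.
by move=> w' lt_w'; apply: IH; apply: leq_trans lt_w' _.
Qed.

Lemma weval_exp_sum w1 w2 : weval w1 = weval w2 -> exp_sum w1 = exp_sum w2.
Proof.
move=> e; have : relator (w1 ++ winv w2).
  by move=> u; rewrite weval_cat e -weval_cat (weval_winv_r d_gt1).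
by move/relator_exp_sum; rewrite exp_sum_cat exp_sum_winv; lia.
Qed.

Definition exp_sum_kernel (g : tfun d) := exists2 w, weval w = g & exp_sum w = 0.

Lemma exp_sum_kernel_normal : normal_subgroup (@in_Gd d) exp_sum_kernel.
Proof.
split; first split.
- by move=> _ [w <- _]; apply/(in_GdP d_gt1); exists w.
- by exists [::].
- move=> _ _ [w1 <- e1] [w2 <- e2]; exists (w1 ++ w2); last by rewrite exp_sum_cat e1 e2.
  by apply: functional_extensionality => u; rewrite weval_cat.
- move=> _ _ [w <- e] /(in_GdP d_gt1) [w' <-] inv; exists w' => //.
  have : weval (w ++ w') = weval [::].
    by apply: functional_extensionality => u; rewrite weval_cat -[RHS]/(tid u) -inv.
  by move/weval_exp_sum; rewrite exp_sum_cat e add0r => ->.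
move=> _ _ /(in_GdP d_gt1) [w <-] [w' <- e]; exists (weval (winv w ++ w' ++ w)).
  by exists (winv w ++ w' ++ w); rewrite // !exp_sum_cat exp_sum_winv e; lia.
apply: functional_extensionality => u; rewrite /tmul.
by rewrite weval_cat -(weval_cat w (winv w)) (weval_winv_r d_gt1) weval_cat.
Qed.

Lemma commutator_neq_id (i : 'I_d) :
  weval [:: (i, true); (ordS i, true); (i, false); (ordS i, false)] <> @tid d.
Proof.
move/(congr1 (fun f => f [:: i])); rewrite weval_cons /tid => -[] /eqP /=.
have S_neq := ordS_neq i d_gt1; have SS_neq := ordSS_neq i d_gt2.
have SSS_neq := ordS_neq (ordS i) d_gt1.
by rewrite !eqxx ?(negbTE S_neq) ?(negbTE SS_neq) ?(negbTE SSS_neq) /= eqxx /= (negbTE S_neq).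
Qed.

Lemma exp_sum_bounded (hs : seq (tfun d)) : exists B : int,
  forall k w, k < size hs -> weval w = nth (@tid d) hs k -> (exp_sum w <= B)%R.
Proof.
elim: hs => [|h hs [B bound]]; first by exists 0.
have [[w0 e0] | not_word] := classic (exists w0, weval w0 = h).
  exists (Num.max (exp_sum w0) B) => -[|k] w /= lt_k e.
    by rewrite (weval_exp_sum (etrans e (esym e0))); lia.
  by have := bound k w lt_k e; lia.
exists B => -[|k] w /= lt_k e; last exact: bound lt_k e.
by case: not_word; exists w.
Qed.

Lemma exp_sum_gen_pow (i : 'I_d) k : (exp_sum (nseq k (i, true)) = k%:Z)%R.
Proof. by rewrite /exp_sum /nsign !count_nseq /=; lia. Qed.

Lemma Gd_infinite : infinite_set (@in_Gd d).
Proof.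
case=> gs cover; have [B bound] := exp_sum_bounded gs.
pose w := nseq (absz B).+1 (Ordinal (ltnW d_gt1), true).
have [k lt_k e] := cover _ ((in_GdP d_gt1 _).2 (ex_intro _ w erefl)).
by have := bound k w lt_k e; rewrite exp_sum_gen_pow; lia.
Qed.

Lemma exp_sum_kernel_infinite_index : ~ finite_index (@in_Gd d) exp_sum_kernel.
Proof.
case=> hs [in_G cover]; have [B bound] := exp_sum_bounded hs.
pose w := nseq (absz B).+1 (Ordinal (ltnW d_gt1), true).
have [k lt_k [_ [wn <- en] e]] := cover _ ((in_GdP d_gt1 _).2 (ex_intro _ w erefl)).
have [wh eh] := (in_GdP d_gt1 _).1 (in_G k lt_k).
have : weval w = weval (wn ++ wh).
  by apply: functional_extensionality => u; rewrite e weval_cat eh.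
move/weval_exp_sum; rewrite exp_sum_cat en exp_sum_gen_pow.
by have := bound k wh lt_k eh; lia.
Qed.

Lemma exp_sum_kernel_nontrivial : exists2 g, exp_sum_kernel g & g <> @tid d.
Proof.
pose i := Ordinal (ltnW d_gt1).
pose c := [:: (i, true); (ordS i, true); (i, false); (ordS i, false)].
exists (weval c); last exact: commutator_neq_id.
by exists c; rewrite // /exp_sum /nsign /=.
Qed.

End ExponentSum.

End Words.

Theorem corollary4p4 (d : nat) (hd : 3 <= d) (hodd : odd d) :
  infinite_set (@in_Gd d) /\
  exists N : tfun d -> Prop,
    [/\ normal_subgroup (@in_Gd d) N,
        (exists2 n, N n & n <> @tid d)
      & ~ finite_index (@in_Gd d) N].
Proof.
split; first exact: Gd_infinite hd.
exists (@exp_sum_kernel d); split.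
- exact: exp_sum_kernel_normal hd.
- exact: exp_sum_kernel_nontrivial hd.
- exact: exp_sum_kernel_infinite_index hd.
Qed.
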